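(* Let $G$ be a graph. Then for every induced subgraph $H$ of $G$, \[\chi(G) \leq \frac{1}{2} \left(\omega(G) + \Delta(G) + 1 \right) + \frac{5\kappa(\overline{G}) + 3\chi(H) - |H|}{4}.\]
   Context: All graphs are finite and simple with non-empty vertex set; induced subgraphs have non-empty vertex set. $|G|$ denotes the number of vertices, $\chi$ the chromatic number, $\omega$ the clique number, $\Delta$ the maximum degree. $\overline{G}$ is the complement of $G$, and $\kappa(\overline{G})$ is its vertex connectivity: the minimum size of a set $K$ of vertices with $\overline{G}-K$ disconnected, or $|G|-1$ if $\overline{G}$ is complete. *)

From mathcomp Require Import all_boot all_order all_algebra.
Set Implicit Arguments. Unset Strict Implicit. Unset Printing Implicit Defensive.

(* A finite simple graph: vertex type T : finType, adjacency e : rel T,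
   assumed symmetric and irreflexive in the theorem statement. *)
Section GraphDefs.
Variables (T : finType) (e : rel T).

Definition colorable_on (S : {set T}) (k : nat) : bool :=
  [exists f : {ffun T -> 'I_k},
     [forall x in S, forall y in S, e x y ==> (f x != f y)]].

(* chromatic number of G[S]: least k such that G[S] is k-colourable
   (#|T| colours always suffice, so the default #|T| is never spurious). *)
Definition chi_on (S : {set T}) : nat :=
  \big[minn/#|T|]_(k < #|T|.+1 | colorable_on S k) k.

Definition chi : nat := chi_on [set: T].

Definition is_clique (A : {set T}) : bool :=
  [forall x in A, forall y in A, (x != y) ==> e x y].

Definition omega : nat := \max_(A : {set T} | is_clique A) #|A|.

Definition Delta : nat := \max_(x : T) #|[set y | e x y]|.

Definition compl_rel : rel T := fun x y => (x != y) && ~~ e x y.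

Definition compl_disconnected_by (K : {set T}) : bool :=
  [exists u, exists v,
     [&& u \notin K, v \notin K &
       ~~ connect (fun x y => [&& x \notin K, y \notin K & compl_rel x y]) u v]].

Definition compl_complete : bool :=
  [forall x, forall y, (x != y) ==> compl_rel x y].

Definition kappa_compl : nat :=
  if compl_complete then #|T| - 1
  else \big[minn/#|T|]_(K : {set T} | compl_disconnected_by K) #|K|.

End GraphDefs.

From mathcomp Require Import all_boot all_order all_algebra.
From mathcomp Require Import zify lra.
Import GRing.Theory Num.Theory.
Set Implicit Arguments. Unset Strict Implicit. Unset Printing Implicit Defensive.

(* Unless G is edgeless, deleting a minimum separator K of the complement
   leaves two nonempty parts A and B of G joined completely to each other; K
   costs at most |K| colours and |K| vertices of H.  Over the join, chi, omega
   and the chromatic numbers of the two traces of H add up, and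
   Delta(A u B) >= |B| + Delta(A), |A| + Delta(B), so it suffices to prove, for
   every vertex set S and H included in S,
     4 chi(S) + |H| <= 2 omega(S) + |S| + Delta(S) + 1 + 3 chi(H).
   This goes by induction on |S|, deleting a maximal stable set that contains
   a colour class of an optimal colouring of H (or, when H is empty, has at
   least three vertices): chi(S) drops by at most one and Delta(S) by at least
   one.  What remains are graphs without stable sets of size three.  There the
   classes of an optimal colouring have at most two vertices, the singleton
   classes form a clique U, and recolouring arguments show that some vertex
   has at most 2 omega - 2|U| non-neighbours, which gives
   4 chi <= 2|S| + 2|U| <= 2 omega + |S| + Delta + 1. *)

Lemma leq_bigminn_cond (I : finType) (P : pred I) (F : I -> nat) x j :
  P j -> \big[minn/x]_(i | P i) F i <= F j.
Proof.
rewrite unlock /= => Pj; have : j \in index_enum I by rewrite mem_index_enum.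
elim: (index_enum I) => // i r IHr; rewrite inE /= => /orP [/eqP <-|jr].
  by rewrite Pj geq_minl.
by case: (P i); [apply: leq_trans (geq_minr _ _) (IHr jr) | apply: IHr].
Qed.

Lemma double_card_imset_le (aT rT : finType) (f : aT -> rT) (A : {set aT}) :
  {in A, forall x, exists2 y, y \in A & (y != x) && (f y == f x)} ->
  2 * #|f @: A| <= #|A|.
Proof.
move=> twins; rewrite mulnC -sum_nat_const -[#|A|]sum1_card.
rewrite [X in _ <= X](partition_big_imset f) /=.
apply: leq_sum => _ /imsetP [x xA ->]; rewrite sum1dep_card.
have [y yA /andP [yx fyx]] := twins x xA.
have <- : #|[set x; y]| = 2 by rewrite cards2 eq_sym yx.
apply: subset_leq_card.
by apply/subsetP => z; rewrite !inE => /orP [] /eqP ->; rewrite ?xA ?yA ?eqxx.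
Qed.

Section Graph.
Variables (T : finType) (e : rel T).
Hypotheses (e_sym : symmetric e) (e_irr : irreflexive e).

Implicit Types (S A B H I R : {set T}).

Definition proper_on (C : eqType) S (f : T -> C) :=
  {in S &, forall x y, e x y -> f x != f y}.

Lemma proper_onP (C : eqType) S (f : T -> C) :
  reflect (proper_on S f) [forall x in S, forall y in S, e x y ==> (f x != f y)].
Proof.
apply: (iffP forall_inP) => [fP x y xS yS | fP x xS].
  by move/forall_inP/(_ y yS)/implyP: (fP x xS).
by apply/forall_inP => y yS; apply/implyP/fP.
Qed.

Lemma proper_onS (C : eqType) A B (f : T -> C) :
  A \subset B -> proper_on B f -> proper_on A f.
Proof. by move=> /subsetP AB fP x y /AB xB /AB yB; apply: fP. Qed.

Definition colourable S m :=
  [exists f : {ffun T -> T},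
     [forall x in S, forall y in S, e x y ==> (f x != f y)] && (#|f @: S| <= m)].

Lemma colourable_card S : colourable S #|S|.
Proof.
apply/existsP; exists [ffun x => x]; apply/andP; split; last exact: leq_imset_card.
by apply/proper_onP => x y _ _; apply: contraL => /eqP; rewrite !ffunE => ->; rewrite e_irr.
Qed.

Definition chromatic S := ex_minn (ex_intro (colourable S) _ (colourable_card S)).

Lemma chromatic_le_card S : chromatic S <= #|S|.
Proof. by rewrite /chromatic; case: ex_minnP => m _; apply; apply: colourable_card. Qed.

(* Colouring each vertex by a canonical representative of its colour class
   turns any colouring into one with values in [T] and no more colours. *)
Lemma chromatic_le_imset (C : finType) S (f : T -> C) :
  proper_on S f -> chromatic S <= #|f @: S|.
Proof.
move=> fP; have [S0 | [x0 x0S]] := set_0Vmem S.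
  by apply: leq_trans (chromatic_le_card S) _; rewrite S0 cards0.
pose rep c := odflt x0 [pick y in S | f y == c].
have f_rep x : x \in S -> f (rep (f x)) = f x.
  by move=> xS; rewrite /rep; case: pickP => [y /andP [_ /eqP] | /(_ x)] //; rewrite xS eqxx.
rewrite /chromatic; case: ex_minnP => m _; apply; apply/existsP.
exists [ffun x => rep (f x)]; apply/andP; split.
  apply/proper_onP => x y xS yS exy; rewrite !ffunE.
  by apply: contra (fP x y xS yS exy) => /eqP/(congr1 f); rewrite !f_rep // => ->.
have -> : [ffun x => rep (f x)] @: S = rep @: (f @: S).
  by rewrite -imset_comp; apply: eq_imset => x; rewrite ffunE.
exact: leq_imset_card.
Qed.

Lemma chromatic_spec S :
  exists2 f : T -> T, proper_on S f & #|f @: S| = chromatic S.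
Proof.
have : colourable S (chromatic S) by rewrite /chromatic; case: ex_minnP.
case/existsP => f /andP [/proper_onP fP fm].
by exists f => //; apply/eqP; rewrite eqn_leq fm chromatic_le_imset.
Qed.

Lemma chromaticS A B : A \subset B -> chromatic A <= chromatic B.
Proof.
move=> AB; have [f fP <-] := chromatic_spec B.
apply: leq_trans (chromatic_le_imset (proper_onS AB fP)) _.
exact/subset_leq_card/imsetS.
Qed.

Lemma chromaticU A B : chromatic (A :|: B) <= chromatic A + chromatic B.
Proof.
have [f fP <-] := chromatic_spec A; have [g gP <-] := chromatic_spec B.
pose h x : T + T := if x \in A then inl (f x) else inr (g x).
have hP : proper_on (A :|: B) h.
  move=> x y; rewrite /h !inE; case: ifP => xA; case: ifP => yA //= xB yB exy.
  - by apply: contra (fP x y xA yA exy) => /eqP [->].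
  - by apply: contra (gP x y xB yB exy) => /eqP [->].
apply: leq_trans (chromatic_le_imset hP) _.
have sub : h @: (A :|: B) \subset inl @: (f @: A) :|: inr @: (g @: B).
  apply/subsetP => c /imsetP [x + ->]; rewrite /h inE; case: ifP => xA /= xB.
    by rewrite inE !imset_f.
  by rewrite inE orbC !imset_f.
apply: leq_trans (subset_leq_card sub) _.
by apply: leq_trans (leq_card_setU _ _) _; rewrite leq_add ?leq_imset_card.
Qed.

Definition stable A := [forall x in A, forall y in A, ~~ e x y].

Lemma stableP A : reflect {in A &, forall x y, ~~ e x y} (stable A).
Proof.
apply: (iffP forall_inP) => [sA x y xA yA | sA x xA].
  exact: (forall_inP (sA x xA)).
by apply/forall_inP => y; apply: sA.
Qed.

Lemma chromatic_stable I : stable I -> chromatic I <= 1.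
Proof.
move=> /stableP sI; have ttP : proper_on I (fun _ => tt).
  by move=> x y xI yI; rewrite (negbTE (sI x y xI yI)).
by apply: leq_trans (chromatic_le_imset ttP) _; rewrite -(card_unit) max_card.
Qed.

Lemma chromatic_gt0 S x : x \in S -> 0 < chromatic S.
Proof.
move=> xS; have [f _ <-] := chromatic_spec S.
by rewrite card_gt0; apply/set0Pn; exists (f x); apply: imset_f.
Qed.

Lemma chromatic_set0 : chromatic set0 = 0.
Proof. by apply/eqP; rewrite -leqn0 -(cards0 T) chromatic_le_card. Qed.

Lemma chromatic_join A B : {in A & B, forall x y, e x y} ->
  chromatic A + chromatic B <= chromatic (A :|: B).
Proof.
move=> AB; have [f fP <-] := chromatic_spec (A :|: B).
rewrite imsetU cardsU.
have -> : f @: A :&: f @: B = set0.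
  apply/setP => c; rewrite !inE; apply/negP => /andP [/imsetP [x xA ->] /imsetP [y yB fxy]].
  by have := fP x y (subsetP (subsetUl A B) x xA) (subsetP (subsetUr A B) y yB) (AB x y xA yB);
     rewrite fxy eqxx.
by rewrite cards0 subn0 leq_add // chromatic_le_imset //; apply: proper_onS fP;
   rewrite ?subsetUl ?subsetUr.
Qed.

Lemma chromatic_setD_stable S I : stable I -> chromatic S <= chromatic (S :\: I) + 1.
Proof.
move=> sI; apply: leq_trans (chromaticS (_ : S \subset (S :\: I) :|: I)) _.
  by apply/subsetP => x xS; rewrite !inE xS; case: (x \in I).
by apply: leq_trans (chromaticU _ _) _; rewrite leq_add2l chromatic_stable.
Qed.

Lemma chromatic_setD_colour_class H I (f : T -> T) c :
  proper_on H f -> #|f @: H| = chromatic H -> c \in f @: H ->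
  {in H, forall x, f x = c -> x \in I} -> chromatic (H :\: I) < chromatic H.
Proof.
move=> fP f_opt cf classI; rewrite -f_opt.
apply: leq_ltn_trans (chromatic_le_imset (proper_onS (subsetDl H I) fP)) _.
rewrite [X in _ < X](cardsD1 c) cf add1n ltnS subset_leq_card //.
apply/subsetP => _ /imsetP [x /setDP [xH xI] ->]; rewrite in_setD1 imset_f // andbT.
by apply: contraNneq xI; apply: classI.
Qed.

Lemma is_cliqueP A : reflect {in A &, forall x y, x != y -> e x y} (is_clique e A).
Proof.
apply: (iffP forall_inP) => [cA x y xA yA | cA x xA].
  by move/forall_inP/(_ y yA)/implyP: (cA x xA).
by apply/forall_inP => y yA; apply/implyP/cA.
Qed.

Definition omega_on S := \max_(A : {set T} | (A \subset S) && is_clique e A) #|A|.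

Lemma omega_on_ge S A : A \subset S -> is_clique e A -> #|A| <= omega_on S.
Proof. by move=> AS cA; apply: (leq_bigmax_cond (F := fun A : {set T} => #|A|)); rewrite AS. Qed.

Lemma omega_onS A B : A \subset B -> omega_on A <= omega_on B.
Proof.
move=> AB; apply/bigmax_leqP => Q /andP [QA cQ].
by apply: omega_on_ge (subset_trans QA AB) cQ.
Qed.

Lemma omega_on_spec S :
  exists Q : {set T}, [/\ Q \subset S, is_clique e Q & #|Q| = omega_on S].
Proof.
have [|Q /andP [QS cQ] Qmax] := eq_bigmax_cond (fun A : {set T} => #|A|)
   (A := [pred A : {set T} | (A \subset S) && is_clique e A]).
  by apply/card_gt0P; exists set0; rewrite inE sub0set; apply/is_cliqueP => x y; rewrite inE.
by exists Q; rewrite /omega_on Qmax.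
Qed.

Lemma omega_on_gt0 S x : x \in S -> 0 < omega_on S.
Proof.
move=> xS; rewrite -(cards1 x) omega_on_ge ?sub1set //.
by apply/is_cliqueP => a b /set1P -> /set1P ->; rewrite eqxx.
Qed.

Definition Delta_on S := \max_(x in S) #|[set y in S | e x y]|.

Lemma Delta_on_ge S x : x \in S -> #|[set y in S | e x y]| <= Delta_on S.
Proof. exact: (leq_bigmax_cond (F := fun x => #|[set y in S | e x y]|)). Qed.

Lemma Delta_onS A B : A \subset B -> Delta_on A <= Delta_on B.
Proof.
move=> AB; apply/bigmax_leqP => x xA; apply: leq_trans (Delta_on_ge (subsetP AB x xA)).
by apply/subset_leq_card/subsetP => y; rewrite !inE => /andP [/(subsetP AB) -> ->].
Qed.

Lemma Delta_on_spec S x0 : x0 \in S ->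
  exists2 x, x \in S & Delta_on S = #|[set y in S | e x y]|.
Proof.
move=> x0S; have [|x xS xmax] := eq_bigmax_cond (fun x => #|[set y in S | e x y]|)
  (A := [pred x | x \in S]); first by apply/card_gt0P; exists x0.
by exists x; rewrite // -xmax.
Qed.

Definition dominating S I := {in S :\: I, forall z, exists2 w, w \in I & e z w}.

Lemma Delta_on_setD_dominating S I z0 : I \subset S -> dominating S I ->
  z0 \in S :\: I -> Delta_on (S :\: I) < Delta_on S.
Proof.
move=> IS dom z0S'; have [z zS' ->] := Delta_on_spec z0S'.
have [w wI ezw] := dom z zS'; have [zS _] := setDP zS'.
apply: leq_trans (Delta_on_ge zS); apply: proper_card; apply/properP; split.
  by apply/subsetP => y; rewrite !inE => /andP [/andP [_ ->] ->].
by exists w; rewrite !inE ?wI // (subsetP IS w wI) ezw.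
Qed.

Lemma maximal_stable_ext S I0 : I0 \subset S -> stable I0 ->
  exists I, [/\ I0 \subset I, I \subset S, stable I & dominating S I].
Proof.
move=> I0S sI0; pose P I := [&& I0 \subset I, I \subset S & stable I].
have PI0 : P I0 by rewrite /P subxx I0S.
have [I /and3P [I0I IS sI] Imax] := arg_maxnP (fun I : {set T} => #|I|) PI0.
exists I; split => // z /setDP [zS zI]; apply/exists_inP; apply: contraT.
move=> /exists_inPn noedge; have : P (z |: I).
  rewrite /P (subset_trans I0I (subsetUr _ _)) subUset sub1set zS IS.
  apply/stableP => a b /setU1P [-> | aI] /setU1P [-> | bI]; rewrite ?e_irr //.
  - exact: noedge.
  - by rewrite e_sym noedge.
  - exact: (stableP _ sI).
by move/Imax; rewrite cardsU1 zI /= ltnn.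
Qed.

Definition alpha_le2 S := forall x y z, x \in S -> y \in S -> z \in S ->
  x != y -> y != z -> x != z -> [|| e x y, e y z | e x z].

Definition nonnbr S v := [set y in S | (y != v) && ~~ e v y].

Lemma nonnbr_clique S v : alpha_le2 S -> v \in S -> is_clique e (nonnbr S v).
Proof.
move=> a2 vS; apply/is_cliqueP => y z /setIdP [yS /andP [yv vy]] /setIdP [zS /andP [zv vz]] yz.
move: (a2 v y z vS yS zS); rewrite !(eq_sym v) yv zv yz (negbTE vy) (negbTE vz).
by move=> /(_ isT isT isT); rewrite /= orbF.
Qed.

Lemma card_nbr_nonnbr S v : v \in S ->
  #|S| = #|[set y in S | e v y]| + 1 + #|nonnbr S v|.
Proof.
move=> vS; rewrite -(cardsID [set y | e v y] S) -addnA; congr (_ + _).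
  by apply: eq_card => y; rewrite !inE.
rewrite (cardsD1 v) !inE vS e_irr /=; congr (_ + _); apply: eq_card => y.
by rewrite !inE; case: (y \in S); rewrite ?andbT ?andbF.
Qed.

Definition recolour (g : T -> T) x c := fun z => if z == x then c else g z.

Lemma proper_recolour S g x c : proper_on S g ->
  {in S, forall z, e x z -> g z != c} -> proper_on S (recolour g x c).
Proof.
move=> gP free y z yS zS eyz; rewrite /recolour.
case: (eqVneq y x) => [yx | yx]; case: (eqVneq z x) => [zx | zx].
- by move: eyz; rewrite yx zx e_irr.
- by rewrite eq_sym; apply: free => //; rewrite -yx.
- by apply: free => //; rewrite -zx e_sym.
- exact: gP.
Qed.

Section OptimalColouring.
Variables (S : {set T}) (f : T -> T).
Hypotheses (a2 : alpha_le2 S) (fP : proper_on S f) (f_opt : #|f @: S| = chromatic S).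

Lemma same_colour_nonadj x y : x \in S -> y \in S -> f x = f y -> ~~ e x y.
Proof. by move=> xS yS fxy; apply/negP => /(fP xS yS); rewrite fxy eqxx. Qed.

Lemma optimal_not_recolourable g c : proper_on S g -> c \in f @: S ->
  {in S, forall z, g z \in f @: S :\ c} -> False.
Proof.
move=> gP cf gS; have := chromatic_le_imset gP; rewrite -f_opt.
have : #|g @: S| <= #|f @: S :\ c|.
  by apply/subset_leq_card/subsetP => _ /imsetP [z zS ->]; apply: gS.
by rewrite [#|f @: S|](cardsD1 c) cf; lia.
Qed.

Definition solo := [set x in S | [forall z in S, (f z == f x) ==> (z == x)]].

Lemma solo_sub : solo \subset S.
Proof. by apply/subsetP => x /setIdP []. Qed.

Lemma solo_eq w z : w \in solo -> z \in S -> f z = f w -> z = w.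
Proof.
by case/setIdP => _ /forall_inP wP zS /eqP fzw; apply/eqP; move: (wP z zS); rewrite fzw.
Qed.

Lemma solo_colour_neq w z : w \in solo -> z \in S -> z != w -> f z != f w.
Proof. by move=> wU zS; apply: contraNneq => /(solo_eq wU zS) ->. Qed.

Definition partner y := odflt y [pick z in S | (z != y) && (f z == f y)].

Lemma partner_spec y : y \in S :\: solo ->
  [/\ partner y \in S, partner y != y & f (partner y) = f y].
Proof.
case/setDP => yS; rewrite inE yS => /forall_inPn [z zS]; rewrite negb_imply => /andP [fzy zy].
rewrite /partner; case: pickP => [p /and3P [pS py /eqP fpy] | /(_ z)] //.
by rewrite zS zy fzy.
Qed.

Lemma colour_class_partner y z : y \in S :\: solo -> z \in S -> f z = f y ->
  z = y \/ z = partner y.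
Proof.
move=> yD zS fzy; have [pS py fpy] := partner_spec yD; have [yS _] := setDP yD.
case: (eqVneq z y) => [|zy]; first by left.
case: (eqVneq z (partner y)) => [|zp]; first by right.
have eyp := same_colour_nonadj yS pS (esym fpy).
have epz := same_colour_nonadj pS zS (etrans fpy (esym fzy)).
have eyz := same_colour_nonadj yS zS (esym fzy).
move: (a2 yS pS zS); rewrite eq_sym py eq_sym zp eq_sym zy.
by rewrite (negbTE eyp) (negbTE epz) (negbTE eyz) => /(_ isT isT isT).
Qed.

Lemma partner_notin_solo y : y \in S :\: solo -> partner y \in S :\: solo.
Proof.
move=> yD; have [pS py fpy] := partner_spec yD; have [yS ysolo] := setDP yD.
rewrite inE pS andbT; apply: contra ysolo => pU.
by rewrite -(solo_eq pU yS (esym fpy)) in py; rewrite eqxx in py.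
Qed.

Lemma partner_inj : {in S :\: solo &, injective partner}.
Proof.
move=> y z yD zD pyz; have [_ _ fpy] := partner_spec yD; have [_ pz fpz] := partner_spec zD.
have [zS _] := setDP zD.
case: (colour_class_partner yD zS _) => [| // | zp]; first by rewrite -fpz -pyz fpy.
by rewrite -pyz -zp eqxx in pz.
Qed.

Lemma double_chromatic_le : 2 * chromatic S <= #|S| + #|solo|.
Proof.
have cardS : #|S| = #|solo| + #|S :\: solo|.
  by rewrite -(cardsID solo S) (setIidPr solo_sub).
have colours : #|f @: S| <= #|f @: solo| + #|f @: (S :\: solo)|.
  by rewrite -{1}(setID S solo) (setIidPr solo_sub) imsetU leq_card_setU.
have pairs : 2 * #|f @: (S :\: solo)| <= #|S :\: solo|.
  apply: double_card_imset_le => y yD; have [_ py fpy] := partner_spec yD.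
  by exists (partner y); rewrite ?partner_notin_solo // py fpy eqxx.
have := leq_imset_card f solo; rewrite -f_opt; lia.
Qed.

Lemma solo_clique : {in solo &, forall u w, u != w -> e u w}.
Proof.
move=> u w uU wU uw; apply: contraT => nuw; exfalso; have wS := subsetP solo_sub w wU.
(* Otherwise [w] could join the colour class of [u]. *)
pose g := recolour f w (f u).
apply: (@optimal_not_recolourable g (f w)).
- apply: proper_recolour fP _ => z zS ewz; apply: contraNneq nuw => /(solo_eq uU zS) <-.
  by rewrite e_sym.
- exact: imset_f.
- move=> z zS; rewrite /g /recolour; case: ifP => [_ | /negbT zw].
    by rewrite in_setD1 solo_colour_neq ?imset_f // (subsetP solo_sub).
  by rewrite in_setD1 solo_colour_neq ?imset_f.
Qed.

Section SoloVertex.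
Variable u : T.
Hypothesis u_solo : u \in solo.

Lemma nonnbr_solo y : y \in nonnbr S u -> y \in S :\: solo.
Proof.
case/setIdP => yS /andP [yu uy]; rewrite inE yS andbT.
by apply: contra uy => yU; apply: solo_clique; rewrite // eq_sym.
Qed.

Lemma partner_adj_solo y w : y \in nonnbr S u -> w \in solo -> e (partner y) w.
Proof.
move=> yN wU; have yD := nonnbr_solo yN; have [pS py fpy] := partner_spec yD.
have /setIdP [yS /andP [yu uy]] := yN.
have uS := subsetP solo_sub u u_solo; have wS := subsetP solo_sub w wU.
have pw : partner y != w.
  by apply: contraTneq (partner_notin_solo yD) => ->; rewrite inE wU.
have [wu | wu] := eqVneq w u.
  subst w; move: (a2 uS yS pS); rewrite eq_sym yu eq_sym py eq_sym pw (negbTE uy).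
  by rewrite (negbTE (same_colour_nonadj yS pS (esym fpy))) e_sym => /(_ isT isT isT).
apply: contraT => pw'; exfalso.
(* Otherwise [y] could join the class of [u] and its partner that of [w]. *)
apply: (@optimal_not_recolourable
          (recolour (recolour f y (f u)) (partner y) (f w)) (f y)).
- apply: proper_recolour.
    apply: proper_recolour fP _ => z zS eyz.
    by apply: contraNneq uy => /(solo_eq u_solo zS) <-; rewrite e_sym.
  move=> z zS epz; rewrite /recolour; case: ifP => _.
    by rewrite solo_colour_neq // eq_sym.
  by apply: contraNneq pw' => /(solo_eq wU zS) <-.
- exact: imset_f.
- move=> z zS; rewrite /recolour in_setD1; case: ifP => [_ | /negbT/eqP zp].
    rewrite imset_f // andbT eq_sym solo_colour_neq //.
    by apply: contraTneq yD => ->; rewrite inE wU.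
  case: ifP => [_ | /negbT/eqP zy]; first by rewrite imset_f // andbT eq_sym solo_colour_neq.
  rewrite imset_f // andbT; apply/eqP.
  by case/(colour_class_partner yD zS).
Qed.

Lemma partner_adj_partner y1 y2 w :
  y1 \in nonnbr S u -> y2 \in nonnbr S u -> y1 != y2 ->
  w \in solo -> w != u -> ~~ e y1 w -> e (partner y1) (partner y2).
Proof.
move=> y1N y2N y12 wU wu y1w.
have y1D := nonnbr_solo y1N; have y2D := nonnbr_solo y2N.
have /setIdP [y1S /andP [y1u _]] := y1N; have /setIdP [y2S /andP [y2u uy2]] := y2N.
have uS := subsetP solo_sub u u_solo; have wS := subsetP solo_sub w wU.
have y1w' : y1 != w by apply: contraTneq y1D => ->; rewrite inE wU.
have y2w : y2 != w by apply: contraTneq y2D => ->; rewrite inE wU.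
have [f12 | f12] := eqVneq (f y1) (f y2).
  case: (colour_class_partner y1D y2S (esym f12)) => [y21 | <-].
    by rewrite y21 eqxx in y12.
  case: (colour_class_partner y2D y1S f12) => [y12' | <-].
    by rewrite y12' eqxx in y12.
  by apply: (is_cliqueP _ (nonnbr_clique a2 uS)); rewrite // eq_sym.
apply: contraT => p12; exfalso.
(* Otherwise moving [y1] to the class of [w], [y2] to that of [u] and the partner
   of [y2] to the class left by [y1] frees the colour of [y2]. *)
pose g := recolour (recolour (recolour f y1 (f w)) y2 (f u)) (partner y2) (f y1).
apply: (@optimal_not_recolourable g (f y2)).
- apply: proper_recolour; first apply: proper_recolour; first apply: proper_recolour fP _.
  + move=> z zS ey1z; apply: contraNneq y1w => /(solo_eq wU zS) <-; exact: ey1z.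
  + move=> z zS ey2z; rewrite /recolour; case: ifP => _; first by rewrite solo_colour_neq.
    by apply: contraNneq uy2 => /(solo_eq u_solo zS) <-; rewrite e_sym.
  + move=> z zS epz; rewrite /recolour; case: ifP => [_ | /negbT/eqP zy2].
      by rewrite eq_sym solo_colour_neq.
    case: ifP => [_ | /negbT/eqP zy1]; first by rewrite eq_sym solo_colour_neq.
    apply/eqP; case/(colour_class_partner y1D zS) => // zp1.
    by move: p12; rewrite -zp1 e_sym epz.
- exact: imset_f.
- move=> z zS; rewrite /g /recolour in_setD1; case: ifP => [_ | /negbT/eqP zp2].
    by rewrite imset_f // andbT.
  case: ifP => [_ | /negbT/eqP zy2]; first by rewrite imset_f // andbT eq_sym solo_colour_neq.
  case: ifP => [_ | /negbT/eqP zy1]; first by rewrite imset_f // andbT eq_sym solo_colour_neq.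
  rewrite imset_f // andbT; apply/eqP.
  by case/(colour_class_partner y2D zS).
Qed.

Definition loose := [set y in nonnbr S u | [exists w in solo, (w != u) && ~~ e y w]].

Lemma clique_solo_partners R : R \subset nonnbr S u ->
  {in R &, forall y1 y2, y1 != y2 -> (y1 \in loose) || (y2 \in loose)} ->
  #|solo| + #|R| <= omega_on S.
Proof.
move=> RN Rloose.
have RD (y : T) : y \in R -> y \in S :\: solo by move/(subsetP RN)/nonnbr_solo.
have pinj : {in R &, injective partner} by move=> a b /RD aD /RD bD; apply: partner_inj.
have disj : solo :&: partner @: R = set0.
  apply/setP => z; rewrite in_setI in_set0; apply/andP => -[zU /imsetP [y yR zp]].
  by have /setDP [_] := partner_notin_solo (RD y yR); rewrite -zp zU.
rewrite -(card_in_imset pinj) -cardsUI disj cards0 addn0 omega_on_ge //.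
  rewrite subUset solo_sub; apply/subsetP => _ /imsetP [y yR ->].
  by have [] := partner_spec (RD y yR).
have pU (y w : T) : y \in R -> w \in solo -> e (partner y) w.
  by move=> yR; apply: partner_adj_solo (subsetP RN y yR).
apply/is_cliqueP => a b /setUP [aU | /imsetP [y1 y1R ->]] /setUP [bU | /imsetP [y2 y2R ->]] ab.
- exact: solo_clique.
- by rewrite e_sym pU.
- exact: pU.
have y12 : y1 != y2 by apply: contraNneq ab => ->.
have loose_w (y : T) : y \in loose -> exists2 w, w \in solo & (w != u) && ~~ e y w.
  by case/setIdP => _ /exists_inP.
have yN := subsetP RN.
case/orP: (Rloose y1 y2 y1R y2R y12) => /loose_w [w wU /andP [wu yw]].
  exact: (partner_adj_partner (yN _ y1R) (yN _ y2R) y12 wU wu yw).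
by rewrite e_sym; apply: (partner_adj_partner (yN _ y2R) (yN _ y1R) _ wU wu yw); rewrite eq_sym.
Qed.

Lemma clique_solo_tight : #|solo| + #|nonnbr S u :\: loose| <= omega_on S + 1.
Proof.
set P := nonnbr S u :\: loose.
have PD (y : T) : y \in P -> y \in S :\: solo by case/setDP => /nonnbr_solo.
have disj : (solo :\ u) :&: P = set0.
  apply/setP => z; rewrite in_setI in_set0; apply/andP => -[/setD1P [_ zU] /PD].
  by rewrite in_setD zU.
have cardU : #|solo| = #|solo :\ u| + 1 by rewrite (cardsD1 u) u_solo addnC.
suff : #|solo :\ u| + #|P| <= omega_on S by rewrite cardU; lia.
rewrite -cardsUI disj cards0 addn0 omega_on_ge //.
  rewrite subUset (subset_trans (subD1set _ _) solo_sub); apply/subsetP => y /PD.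
  by case/setDP.
have uS := subsetP solo_sub u u_solo.
have Padj (y w : T) : y \in P -> w \in solo :\ u -> e y w.
  case/setDP => yN /negP yloose /setD1P [wu wU]; apply: contraT => yw; case: yloose.
  by rewrite inE yN; apply/exists_inP; exists w; rewrite // wu.
apply/is_cliqueP => a b /setUP [aU | aP] /setUP [bU | bP] ab.
- by apply: solo_clique ab; [case/setD1P: aU | case/setD1P: bU].
- by rewrite e_sym Padj.
- exact: Padj.
- apply: (is_cliqueP _ (nonnbr_clique a2 uS)) ab.
    by case/setDP: aP.
  by case/setDP: bP.
Qed.

Lemma nonnbr_solo_bound : 2 * #|solo| + #|nonnbr S u| <= 2 * omega_on S.
Proof.
have loose_sub : loose \subset nonnbr S u by apply/subsetP => y /setIdP [].
have cardN : #|nonnbr S u| = #|loose| + #|nonnbr S u :\: loose|.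
  by rewrite -(cardsID loose) (setIidPr loose_sub).
have solo_le : #|solo| <= omega_on S.
  by have := @clique_solo_partners set0; rewrite cards0 addn0 sub0set; apply => // y; rewrite inE.
have loose_le : #|solo| + #|loose| <= omega_on S.
  by apply: clique_solo_partners => // y1 y2 ->.
have [tight0 | [y0 y0tight]] := set_0Vmem (nonnbr S u :\: loose).
  by move: cardN; rewrite tight0 cards0; lia.
have R_le : #|solo| + #|y0 |: loose| <= omega_on S.
  apply: clique_solo_partners.
    by rewrite subUset sub1set loose_sub; case/setDP: y0tight => ->.
  by move=> y1 y2 /setU1P [-> | ->] // /setU1P [-> | ->]; rewrite ?eqxx ?orbT.
have := clique_solo_tight; move: R_le; rewrite cardsU1.
by case/setDP: y0tight => _ /negbTE ->; lia.
Qed.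

End SoloVertex.

Lemma exists_nonnbr_bound x0 : x0 \in S ->
  exists2 v, v \in S & 2 * #|solo| + #|nonnbr S v| <= 2 * omega_on S.
Proof.
move=> x0S; have [solo0 | [u uU]] := set_0Vmem solo.
  exists x0 => //; rewrite solo0 cards0 muln0 add0n.
  have sub : nonnbr S x0 \subset S by apply/subsetP => y /setIdP [].
  have := omega_on_ge sub (nonnbr_clique a2 x0S); lia.
by exists u; [exact: subsetP solo_sub u uU | exact: nonnbr_solo_bound].
Qed.

End OptimalColouring.

Theorem chromatic_alpha_le2 S : alpha_le2 S ->
  4 * chromatic S <= 2 * omega_on S + #|S| + Delta_on S + 1.
Proof.
move=> a2; have [S0 | [x0 x0S]] := set_0Vmem S; first by rewrite S0 chromatic_set0.
have [f fP f_opt] := chromatic_spec S.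
have [v vS nonnbr_le] := exists_nonnbr_bound a2 fP f_opt x0S.
have := double_chromatic_le f_opt; have := card_nbr_nonnbr vS; have := Delta_on_ge vS.
lia.
Qed.


Lemma alpha_le2_or_dominating_stable3 S : alpha_le2 S \/
  exists I, [/\ I \subset S, stable I, dominating S I & 2 < #|I|].
Proof.
case: (boolP [exists x in S, exists y in S, exists z in S,
  [&& x != y, y != z, x != z & ~~ [|| e x y, e y z | e x z]]]); last first.
  move=> none; left => x y z xS yS zS xy yz xz; apply: contraNT none => nadj.
  apply/exists_inP; exists x => //; apply/exists_inP; exists y => //.
  by apply/exists_inP; exists z; rewrite // xy yz xz.
case/exists_inP => x xS /exists_inP [y yS /exists_inP [z zS /and4P [xy yz xz]]].
rewrite !negb_or => /and3P [nxy nyz nxz]; right.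
have I0S : [set x; y; z] \subset S by rewrite !subUset !sub1set xS yS zS.
have sI0 : stable [set x; y; z].
  apply/stableP => a b; rewrite !inE -!orbA => /or3P [] /eqP -> /or3P [] /eqP ->;
    by rewrite ?e_irr ?nxy ?nyz ?nxz // e_sym ?nxy ?nyz ?nxz.
have [I [I0I IS sI dom]] := maximal_stable_ext I0S sI0.
exists I; split => //; apply: leq_trans (subset_leq_card I0I).
by rewrite -setUA cardsU1 !inE negb_or xy xz cards2 yz.
Qed.

Lemma dominating_stable_colour_class S H h0 : H \subset S -> h0 \in H ->
  exists I, [/\ I \subset S, stable I, dominating S I & chromatic (H :\: I) < chromatic H].
Proof.
move=> HS h0H; have [f fP f_opt] := chromatic_spec H.
have classS : [set x in H | f x == f h0] \subset S.
  by apply: subset_trans HS; apply/subsetP => x /setIdP [].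
have class_stable : stable [set x in H | f x == f h0].
  apply/stableP => x y /setIdP [xH /eqP fx] /setIdP [yH /eqP fy].
  by apply: (contraL (fP x y xH yH)); rewrite fx fy.
have [I [classI IS sI dom]] := maximal_stable_ext classS class_stable.
exists I; split => //.
apply: (chromatic_setD_colour_class fP f_opt (imset_f f h0H)) => x xH fx.
by apply: (subsetP classI); rewrite inE xH fx eqxx.
Qed.


Theorem chromatic_bound S H : H \subset S ->
  4 * chromatic S + #|H| <= 2 * omega_on S + #|S| + Delta_on S + 1 + 3 * chromatic H.
Proof.
have [n le_S] := ubnP #|S|; elim: n S le_S H => // n IHn S le_S H HS.
have [S0 | [s0 s0S]] := set_0Vmem S.
  by move: HS; rewrite S0 subset0 => /eqP ->; rewrite chromatic_set0 cards0.
(* Deleting a dominating stable set [I] costs at most one colour and lowers the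
   maximum degree, so the induction goes through whenever [I] pays for what [H] loses. *)
have step I : I \subset S -> stable I -> dominating S I ->
    3 * chromatic (H :\: I) + 3 + #|H :&: I| <= 3 * chromatic H + #|I| ->
    4 * chromatic S + #|H| <= 2 * omega_on S + #|S| + Delta_on S + 1 + 3 * chromatic H.
  move=> IS sI dom budget.
  have chiS := chromatic_setD_stable S sI.
  have cardS : #|S| = #|S :\: I| + #|I| by rewrite -(cardsID I S) (setIidPr IS) addnC.
  have cardH : #|H| = #|H :\: I| + #|H :&: I| by rewrite -(cardsID I H) addnC.
  have HS' := subset_leq_card (setSD I HS); have omega_pos := omega_on_gt0 s0S.
  have [S'0 | [z0 z0S']] := set_0Vmem (S :\: I).
    by move: chiS HS'; rewrite S'0 chromatic_set0 cards0; lia.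
  have Delta_lt := Delta_on_setD_dominating IS dom z0S'.
  have omega_le := omega_onS (subsetDl S I).
  have I_gt0 : 0 < #|I| by have [w wI _] := dom z0 z0S'; apply/card_gt0P; exists w.
  have := IHn (S :\: I) ltac:(lia) (H :\: I) (setSD I HS); lia.
have [H0 | [h0 h0H]] := set_0Vmem H.
  case: (alpha_le2_or_dominating_stable3 S) => [a2 | [I [IS sI dom I_gt2]]].
    by rewrite H0 chromatic_set0 cards0; have := chromatic_alpha_le2 a2; lia.
  by apply: (step I) => //; rewrite H0 set0D set0I chromatic_set0 cards0; lia.
have [I [IS sI dom chiH]] := dominating_stable_colour_class HS h0H.
by apply: (step I) => //; have := subset_leq_card (subsetIr H I); lia.
Qed.


Lemma join_disjoint A B : {in A & B, forall x y, e x y} -> A :&: B = set0.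
Proof.
move=> AB; apply/setP => x; rewrite !inE; apply/andP => -[xA xB].
by have := AB x x xA xB; rewrite e_irr.
Qed.

Lemma omega_on_join A B : {in A & B, forall x y, e x y} ->
  omega_on A + omega_on B <= omega_on (A :|: B).
Proof.
move=> AB; have [QA [QAA cQA <-]] := omega_on_spec A; have [QB [QBB cQB <-]] := omega_on_spec B.
have QAB : {in QA & QB, forall x y, e x y}.
  by move=> x y xQ yQ; apply: AB; [apply: (subsetP QAA) | apply: (subsetP QBB)].
rewrite -cardsUI (join_disjoint QAB) cards0 addn0 omega_on_ge ?setUSS //.
apply/is_cliqueP => x y /setUP [xA | xB] /setUP [yA | yB] xy.
- exact: (is_cliqueP _ cQA).
- exact: QAB.
- by rewrite e_sym QAB.
- exact: (is_cliqueP _ cQB).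
Qed.

Lemma Delta_on_join A B a0 : a0 \in A -> {in A & B, forall x y, e x y} ->
  #|B| + Delta_on A <= Delta_on (A :|: B).
Proof.
move=> a0A AB; have [x xA ->] := Delta_on_spec a0A.
apply: leq_trans (Delta_on_ge (x := x) _); last by rewrite inE xA.
have disj : [set y in A | e x y] :&: B = set0.
  by apply: join_disjoint => y z /setIdP [yA _]; apply: AB.
rewrite -cardsUI setIC disj cards0 addn0; apply/subset_leq_card/subsetP => y.
by rewrite !inE => /orP [yB | /andP [-> ->]]; rewrite ?yB ?orbT ?AB.
Qed.

Theorem chromatic_join_bound A B H : A != set0 -> B != set0 ->
  {in A & B, forall x y, e x y} -> H \subset A :|: B ->
  4 * chromatic (A :|: B) + #|H| <=
    2 * omega_on (A :|: B) + 2 * Delta_on (A :|: B) + 2 + 3 * chromatic H.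
Proof.
move=> /set0Pn [a0 a0A] /set0Pn [b0 b0B] AB HAB.
have BA : {in B & A, forall x y, e x y} by move=> x y xB yA; rewrite e_sym AB.
have HU : H = (H :&: A) :|: (H :&: B) by rewrite -setIUr (setIidPl HAB).
have cardH : #|H| = #|H :&: A| + #|H :&: B|.
  by rewrite {1}HU -cardsUI setIACA (join_disjoint AB) setI0 cards0 addn0.
have chiH : chromatic (H :&: A) + chromatic (H :&: B) <= chromatic H.
  by rewrite {3}HU chromatic_join // => x y /setIP [_ xA] /setIP [_ yB]; apply: AB.
have DeltaA := Delta_on_join a0A AB.
have DeltaB : #|A| + Delta_on B <= Delta_on (A :|: B) by rewrite setUC (Delta_on_join b0B BA).
have := chromaticU A B; have := omega_on_join AB.
have := chromatic_bound (subsetIr H A); have := chromatic_bound (subsetIr H B).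
lia.
Qed.

Lemma separator_join K : compl_disconnected_by e K ->
  exists A B, [/\ A :|: B = ~: K, A != set0, B != set0 & {in A & B, forall x y, e x y}].
Proof.
case/existsP => u /existsP [v /and3P [uK vK]].
set r := (fun x y => _) => nuv.
pose A := [set z | (z \notin K) && connect r u z].
exists A, (~: K :\: A); split.
- apply/setP => z; rewrite !inE; case: (z \in K); rewrite ?andbF ?andbT //=.
  by case: (connect r u z).
- by apply/set0Pn; exists u; rewrite inE uK connect0.
- by apply/set0Pn; exists v; rewrite !inE vK (negbTE nuv).
move=> x y /setIdP [xK ux] /setDP [yK yA]; apply: contraNT yA => nexy.
have [<- | xy] := eqVneq x y; first by rewrite inE xK.
rewrite inE -in_setC yK (connect_trans ux) // connect1 //.
by rewrite /r xK -in_setC yK /compl_rel xy nexy.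
Qed.

Lemma compl_complete_stable : compl_complete e -> stable [set: T].
Proof.
move=> /forallP complete; apply/stableP => x y _ _.
have [<- | xy] := eqVneq x y; first by rewrite e_irr.
by move/forallP/(_ y): (complete x); rewrite xy => /andP [].
Qed.

Lemma kappa_compl_cases :
  (compl_complete e /\ kappa_compl e = #|T| - 1) \/
  exists2 K, compl_disconnected_by e K & #|K| <= kappa_compl e.
Proof.
rewrite /kappa_compl; case: ifP => complete; first by left.
right; have [x [y [xy exy]]] : exists x y, x != y /\ e x y.
  move/negbT: complete => /forallPn [x /forallPn [y]]; rewrite negb_imply => /andP [xy].
  by rewrite /compl_rel xy negbK; exists x, y.
have sep : compl_disconnected_by e (~: [set x; y]).
  apply/existsP; exists x; apply/existsP; exists y.
  rewrite !inE !eqxx orbT /=; apply/negP => /connectP [[_ /= yx | z p /= /andP [xz _] _]].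
    by rewrite yx eqxx in xy.
  move: xz; rewrite !inE !negbK /compl_rel => /and3P [_ /orP [/eqP -> | /eqP ->]].
    by rewrite eqxx.
  by rewrite exy andbF.
apply: (big_ind (fun m => exists2 K, compl_disconnected_by e K & #|K| <= m)).
- by exists (~: [set x; y]); rewrite ?max_card.
- move=> a b [K1 sep1 K1a] [K2 sep2 K2b]; have [ab | ba] := leqP a b.
    by exists K1; rewrite ?(minn_idPl ab).
  by exists K2; rewrite ?(minn_idPr (ltnW ba)).
- by move=> K sepK; exists K.
Qed.

Lemma chi_onE S x0 : x0 \in S -> chi_on e S = chromatic S.
Proof.
move=> x0S; apply/eqP; rewrite eqn_leq; apply/andP; split; last first.
  apply: (big_ind (fun m => chromatic S <= m)).
  - exact: leq_trans (chromatic_le_card S) (max_card S).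
  - by move=> a b; rewrite leq_min => ->.
  - move=> k /existsP [g /proper_onP gP]; apply: leq_trans (chromatic_le_imset gP) _.
    by rewrite -[k in _ <= k]card_ord max_card.
have [f fP <-] := chromatic_spec S.
have fx0 : f x0 \in f @: S := imset_f f x0S.
have lt : #|f @: S| < #|T|.+1 by rewrite ltnS max_card.
apply: (@leq_bigminn_cond _ _ (fun k : 'I_#|T|.+1 => k : nat) _ (Ordinal lt)).
apply/existsP; exists [ffun x => enum_rank_in fx0 (f x)]; apply/proper_onP => x y xS yS exy.
rewrite !ffunE; apply: contra (fP x y xS yS exy) => /eqP.
by move/(enum_rank_in_inj (imset_f f xS) (imset_f f yS)) => ->.
Qed.

Lemma omega_setT : omega e = omega_on [set: T].
Proof. by apply: eq_bigl => A; rewrite subsetT. Qed.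

Lemma Delta_setT : Delta e = Delta_on [set: T].
Proof.
apply: eq_big => [x | x _]; first by rewrite in_setT.
by apply: eq_card => y; rewrite !inE.
Qed.

Theorem chromatic_bound_kappa H h0 : h0 \in H ->
  4 * chi e + #|H| <= 2 * omega e + 2 * Delta e + 2 + 5 * kappa_compl e + 3 * chi_on e H.
Proof.
move=> h0H; have hT : h0 \in [set: T] := in_setT h0.
rewrite /chi !(chi_onE hT, chi_onE h0H) omega_setT Delta_setT.
have omega_pos := omega_on_gt0 hT; have chiH_pos := chromatic_gt0 h0H.
have HT : #|H| <= #|T| := max_card H.
case: kappa_compl_cases => [[/compl_complete_stable/chromatic_stable chi1 ->] | [K sepK K_le]].
  have : 0 < #|T| by apply/card_gt0P; exists h0.
  lia.
have [A [B [ABK A0 B0 AB]]] := separator_join sepK.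
have HK : H :&: ~: K \subset A :|: B by rewrite ABK subsetIr.
have := chromatic_join_bound A0 B0 AB HK; rewrite ABK => join_bound.
have chiT : chromatic [set: T] <= chromatic (~: K) + #|K|.
  rewrite -(setUCr K) setUC; apply: leq_trans (chromaticU _ _) _.
  by rewrite leq_add2l chromatic_le_card.
have cardH : #|H| <= #|H :&: ~: K| + #|K|.
  by rewrite -(cardsID (~: K) H) setDE setCK leq_add2l subset_leq_card ?subsetIr.
have := chromaticS (subsetIl H (~: K)).
have := omega_onS (subsetT (~: K)); have := Delta_onS (subsetT (~: K)).
lia.
Qed.

End Graph.

Local Open Scope ring_scope.

Theorem corollary5 (T : finType) (e : rel T)
    (e_sym : symmetric e) (e_irr : irreflexive e)
    (H : {set T}) (H_nonempty : H != set0) :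
  ((chi e)%:R : rat) <=
    ((omega e)%:R + (Delta e)%:R + 1) / 2
    + (5 * (kappa_compl e)%:R + 3 * (chi_on e H)%:R - (#|H|)%:R) / 4.
Proof.
have [h0 h0H] := set0Pn _ H_nonempty.
have := chromatic_bound_kappa e_sym e_irr h0H.
rewrite -(ler_nat rat) !natrD.
lra.
Qed.
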